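(* Let $X$ be a real Banach space with the Ball Huskable Property ($BHP$). Then for every separable closed subspace $Y$ of $X$ there exists a separable closed subspace $Z$ of $X$ with $Y\subseteq Z$ such that $Z$ has $BHP$.
   Context: For a real Banach space $X$, $B_X$ denotes its closed unit ball. $X$ has the Ball Huskable Property ($BHP$) if for every $\varepsilon>0$ there is a nonempty relatively weakly open subset of $B_X$ (i.e., a nonempty set of the form $U\cap B_X$ with $U$ open in the weak topology of $X$) of diameter less than $\varepsilon$. *)

From HB Require Import structures.
From mathcomp Require Import all_boot all_order all_algebra.
From mathcomp Require Import all_classical all_reals all_analysis.
Set Implicit Arguments. Unset Strict Implicit. Unset Printing Implicit Defensive.
Import Order.TTheory GRing.Theory Num.Theory.
Import numFieldNormedType.Exports.
Local Open Scope classical_set_scope.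
Local Open Scope ring_scope.

Section BHPDefs.
Context {R : realType} {X : normedModType R}.

Definition lin_subspace (Y : set X) : Prop :=
  Y 0 /\ (forall x y, Y x -> Y y -> Y (x + y)) /\
  (forall (a : R) x, Y x -> Y (a *: x)).

Definition separable_set (Y : set X) : Prop :=
  exists D : set X, countable D /\ D `<=` Y /\ Y `<=` closure D.

(* f (a function on X, only its restriction to Z matters) is a continuous
   linear functional on the subspace Z, i.e. an element of Z^* *)
Definition dual_on (Z : set X) (f : X -> R) : Prop :=
  (forall (a : R) x y, Z x -> Z y -> f (a *: x + y) = a * f x + f y) /\
  {within Z, continuous f}.

(* U is open in the weak topology sigma(Z, Z^* ) of the subspace Z *)
Definition weakly_open_in (Z : set X) (U : set X) : Prop :=
  U `<=` Z /\
  forall x, U x -> exists (n : nat) (fs : 'I_n -> X -> R) (e : R),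
    0 < e /\ (forall i, dual_on Z (fs i)) /\
    forall y, Z y -> (forall i, `|fs i y - fs i x| < e) -> U y.

Definition unit_ball_in (Z : set X) : set X := [set z | Z z /\ `|z| <= 1].

Definition diam_lt (S : set X) (e : R) : Prop :=
  exists d : R, d < e /\ forall x y, S x -> S y -> `|x - y| <= d.

Definition BHP_on (Z : set X) : Prop :=
  forall e : R, 0 < e -> exists U : set X,
    weakly_open_in Z U /\ (U `&` unit_ball_in Z) !=set0 /\
    diam_lt (U `&` unit_ball_in Z) e.

End BHPDefs.

Definition BHP {R : realType} (X : normedModType R) : Prop :=
  BHP_on (@setT X).

From HB Require Import structures.
From mathcomp Require Import all_boot all_order all_algebra.
From mathcomp Require Import all_classical all_reals all_analysis.
Import Order.TTheory GRing.Theory Num.Theory.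
Import numFieldNormedType.Exports.
Local Open Scope classical_set_scope.
Local Open Scope ring_scope.

(* Since X has BHP, for every k we may choose a weakly open set U_k of X whose
   slice U_k ∩ B_X is nonempty and of diameter < 1/(k+1), together with a
   point x_k in that slice.  Put Z := closure (Y + span {x_k | k : nat}).
   - Z is a closed linear subspace containing Y (closures of subspaces are
     subspaces).
   - Z is separable: Y + span{x_k} has the countable dense set
     D + (rational combinations of the x_k), D dense countable in Y, and the
     closure of a separable set is separable.
   - Z has BHP: a weakly open set of X restricts to a weakly open set of Z
     (functionals on X restrict to functionals on Z), the slice U_k ∩ B_Z
     contains x_k, and its diameter is at most that of U_k ∩ B_X. *)

Section NormedSpaceFacts.
Context {R : realType} {X : normedModType R}.

Lemma closure_normP (A : set X) x :
  closure A x <-> forall e : R, 0 < e -> exists a, A a /\ `|x - a| < e.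
Proof.
split.
- move=> cx e e0.
  have [a [Aa xa]] := cx _ (@nbhsx_ballx _ _ x e e0).
  by exists a; split => //; rewrite -ball_normE in xa.
- move=> approx B /nbhs_ballP[e e0 eB].
  have [a [Aa xa]] := approx e e0.
  by exists a; split => //; apply: eB; rewrite -ball_normE.
Qed.

Lemma lin_subspace_closure (S : set X) :
  lin_subspace S -> lin_subspace (closure S).
Proof.
move=> [S0 [SD SZ]]; split; first exact: subset_closure.
split.
- move=> x y /closure_normP cx /closure_normP cy; apply/closure_normP => e e0.
  have e20 : 0 < e / 2 by rewrite divr_gt0.
  have [a [Sa xa]] := cx _ e20; have [b [Sb yb]] := cy _ e20.
  exists (a + b); split; first exact: SD.
  rewrite opprD addrACA; apply: le_lt_trans (ler_normD _ _) _.
  by rewrite (splitr e) ltrD.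
- move=> c x /closure_normP cx; apply/closure_normP => e e0.
  have d0 : 0 < e / (`|c| + 1) by rewrite divr_gt0 // ltr_wpDl.
  have [a [Sa xa]] := cx _ d0.
  exists (c *: a); split; first exact: SZ.
  rewrite -scalerBr normrZ.
  apply: (le_lt_trans (y := (`|c| + 1) * `|x - a|)).
    by rewrite ler_wpM2r // lerDl.
  by rewrite mulrC -ltr_pdivlMr // ltr_wpDl.
Qed.

Lemma separable_closure (S : set X) :
  separable_set S -> separable_set (closure S).
Proof.
move=> [D [cD [DS SD]]]; exists D; split => //; split.
  by apply: subset_trans DS _; exact: subset_closure.
have -> : closure D = closure (closure D) by apply/closure_id/closed_closure.
exact: closureS.
Qed.

Definition span_seq (Y : set X) (x : nat -> X) : set X :=
  [set z | exists y n (a : nat -> R),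
     Y y /\ z = y + \sum_(0 <= i < n) a i *: x i].

Lemma sum_pad (x : nat -> X) (a : nat -> R) m n : (m <= n)%N ->
  \sum_(0 <= i < n) (if (i < m)%N then a i else 0) *: x i =
  \sum_(0 <= i < m) a i *: x i.
Proof.
move=> mn; rewrite (big_cat_nat (leq0n m) mn) /=.
have -> : \sum_(m <= i < n) (if (i < m)%N then a i else 0) *: x i = 0.
  rewrite big_nat_cond big1 // => i /andP[/andP[mi _] _].
  by rewrite ltnNge mi scale0r.
by rewrite addr0; apply: eq_big_nat => i /andP[_ ->].
Qed.

Lemma lin_subspace_span_seq (Y : set X) (x : nat -> X) :
  lin_subspace Y -> lin_subspace (span_seq Y x).
Proof.
move=> [Y0 [YD YZ]]; split.
  by exists 0, 0%N, (fun=> 0); split => //; rewrite big_geq // addr0.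
split.
- move=> _ _ [y1 [n1 [a1 [Y1 ->]]]] [y2 [n2 [a2 [Y2 ->]]]].
  pose pad n (a : nat -> R) i := if (i < n)%N then a i else 0.
  exists (y1 + y2), (maxn n1 n2), (fun i => pad n1 a1 i + pad n2 a2 i).
  split; first exact: YD.
  under [in RHS]eq_bigr do rewrite scalerDl.
  by rewrite big_split /= !sum_pad ?leq_maxl ?leq_maxr // addrACA.
- move=> c _ [y [n [a [Yy ->]]]].
  exists (c *: y), n, (fun i => c * a i); split; first exact: YZ.
  rewrite scalerDr scaler_sumr; congr (_ + _).
  by apply: eq_bigr => i _; rewrite scalerA.
Qed.

Lemma subset_span_seq (Y : set X) (x : nat -> X) : Y `<=` span_seq Y x.
Proof.
by move=> y Yy; exists y, 0%N, (fun=> 0); split => //; rewrite big_geq // addr0.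
Qed.

Lemma span_seq_vec (Y : set X) (x : nat -> X) k :
  Y 0 -> span_seq Y x (x k).
Proof.
move=> Y0; exists 0, k.+1, (fun i => (i == k)%:R); split => //.
rewrite big_nat_recr //= eqxx scale1r add0r big_nat big1 ?add0r //.
by move=> i /andP[_ ik]; rewrite ltn_eqF // scale0r.
Qed.

Lemma rat_approx_sum n (a : nat -> R) (x : nat -> X) (e : R) : 0 < e ->
  exists q : nat -> rat,
    `|\sum_(0 <= i < n) a i *: x i - \sum_(0 <= i < n) ratr (q i) *: x i| < e.
Proof.
elim: n e => [|n IH] e e0.
  by exists (fun=> 0); rewrite !big_geq // subrr normr0.
have e20 : 0 < e / 2 by rewrite divr_gt0.
have [q hq] := IH _ e20.
have d0 : 0 < e / 2 / (`|x n| + 1) by rewrite divr_gt0 // ltr_wpDl.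
have [y [ball_r [r _ ry]]] :=
  @dense_rat R (ball (a n) (e / 2 / (`|x n| + 1))) (ex_intro _ _ (ballxx _ d0))
    (ball_open _ _).
rewrite -ry -ball_normE /= in ball_r.
exists (fun i => if i == n then r else q i).
rewrite !big_nat_recr //= eqxx.
have -> : \sum_(0 <= i < n) ratr (if i == n then r else q i) *: x i =
    \sum_(0 <= i < n) ratr (q i) *: x i.
  by apply: eq_big_nat => i /andP[_ ilt]; rewrite ltn_eqF.
rewrite opprD addrACA; apply: le_lt_trans (ler_normD _ _) _.
rewrite (splitr e) ltrD // -scalerBl normrZ.
apply: (le_lt_trans (y := `|a n - ratr r| * (`|x n| + 1))).
  by rewrite ler_wpM2l // lerDl.
by rewrite -ltr_pdivlMr // ltr_wpDl.
Qed.

(* Adding countably many vectors to a separable set keeps it separable: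
   D + (rational combinations of the x_i) is countable and dense. *)
Lemma separable_span_seq (Y : set X) (x : nat -> X) :
  separable_set Y -> separable_set (span_seq Y x).
Proof.
move=> [D [cD [DY YD]]].
pose f (p : X * seq rat) :=
  p.1 + \sum_(0 <= i < size p.2) ratr (nth 0 p.2 i) *: x i.
exists (f @` (D `*` [set: seq rat])); split.
  apply: card_le_trans (card_image_le f _) _.
  exact: countableX cD (countableP _).
split.
  move=> _ [[d t] [/= Dd _] <-].
  by exists d, (size t), (fun i => ratr (nth 0 t i)); split => //; exact: DY.
move=> _ [y [n [a [Yy ->]]]]; apply/closure_normP => e e0.
have e20 : 0 < e / 2 by rewrite divr_gt0.
have [d [Dd yd]] := (closure_normP _ _).1 (YD _ Yy) _ e20.
have [q aq] := rat_approx_sum n a x _ e20.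
exists (f (d, mkseq q n)); split; first by exists (d, mkseq q n).
rewrite /f /= size_mkseq.
have -> : \sum_(0 <= i < n) ratr (nth 0 (mkseq q n) i) *: x i =
    \sum_(0 <= i < n) ratr (q i) *: x i.
  by apply: eq_big_nat => i /andP[_ ilt]; rewrite nth_mkseq.
rewrite opprD addrACA; apply: le_lt_trans (ler_normD _ _) _.
by rewrite (splitr e) ltrD.
Qed.

Lemma weakly_open_restrict (Z U : set X) :
  weakly_open_in setT U -> weakly_open_in Z (U `&` Z).
Proof.
move=> [_ wU]; split; first by move=> ? [].
move=> w [Uw _]; have [n [fs [e [e0 [dual_fs nearU]]]]] := wU w Uw.
exists n, fs, e; split => //; split.
  move=> i; have [linf contf] := dual_fs i; split.
    by move=> c u v _ _; exact: linf.
  exact: continuous_subspaceW (@subsetT _ _) contf.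
by move=> y Zy near_y; split => //; apply: nearU.
Qed.

Lemma BHP_on_of_small_slices (Z : set X) :
  (forall e : R, 0 < e -> exists U, weakly_open_in setT U /\
     (U `&` unit_ball_in Z) !=set0 /\ diam_lt (U `&` unit_ball_in setT) e) ->
  BHP_on Z.
Proof.
move=> slices e e0; have [U [wU [[z [Uz [Zz nz]]] [d [de dU]]]]] := slices e e0.
exists (U `&` Z); split; first exact: weakly_open_restrict.
split; first by exists z.
exists d; split => // u v [[Uu _] [_ nu]] [[Uv _] [_ nv]].
by apply: dU.
Qed.

End NormedSpaceFacts.

Theorem mainTheorem3 (R : realType) (X : completeNormedModType R) :
  BHP X ->
  forall Y : set X, lin_subspace Y -> closed Y -> separable_set Y ->
  exists Z : set X, lin_subspace Z /\ closed Z /\ separable_set Z /\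
    Y `<=` Z /\ BHP_on Z.
Proof.
move=> bhpX Y linY _ sepY.
have slice k : exists p : set X * X, weakly_open_in setT p.1 /\
    (p.1 `&` unit_ball_in setT) p.2 /\
    diam_lt (p.1 `&` unit_ball_in setT) k.+1%:R^-1.
  have [U [wU [[z Uz] dU]]] := bhpX k.+1%:R^-1 ltac:(by rewrite invr_gt0).
  by exists (U, z).
have [pk slice_pk] := choice slice.
pose x k := (pk k).2.
pose Z := closure (span_seq Y x).
have Zx k : Z (x k) by apply/subset_closure/span_seq_vec; case: linY.
exists Z; split; first exact/lin_subspace_closure/lin_subspace_span_seq.
split; first exact: closed_closure.
split; first exact/separable_closure/separable_span_seq.
split; first by move=> y Yy; apply/subset_closure/subset_span_seq.
apply: BHP_on_of_small_slices => e e0.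
have [k] := ltr_add_invr e0; rewrite add0r => ke.
have [wU [[Ux [_ nx]] [d [dk dU]]]] := slice_pk k.
exists (pk k).1; split => //; split; first by exists (x k).
by exists d; split => //; apply: lt_trans ke.
Qed.
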